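(* Let $F\ge1$ and let $n_1,\dots,n_F$ be positive integers with $n_1\ge2$. With $p_a,q_a,r,r^{(2)}$ as in the context, define $$A_F=\sum_{a=1}^{F-1}(-1)^{a+1}\frac{1}{p_aq_a}+(-1)^{F+1}\frac{1}{p_F r}.$$ Then $A_F=r^{(2)}/r$.
   Context: For $1\le k\le a\le F$, let $p^{(k)}_a/q^{(k)}_a$ (coprime positive integers) equal the continued fraction $[n_a,\dots,n_k]:=1/(n_a+1/(n_{a-1}+\cdots+1/n_k))$, $[n_k]=1/n_k$; write $p_a=p^{(1)}_a$, $q_a=q^{(1)}_a$. Set $r^{(k)}=p^{(k)}_F+q^{(k)}_F$ for $1\le k\le F$, $r^{(F+1)}=1$, and $r=r^{(1)}$ (so $r^{(2)}=1$ when $F=1$). *)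

From mathcomp Require Import all_boot all_order all_algebra.
Set Implicit Arguments. Unset Strict Implicit. Unset Printing Implicit Defensive.
Import Order.TTheory GRing.Theory Num.Theory.
Local Open Scope ring_scope.

(* The sequence n_1, ..., n_F is a function n : nat -> nat (indices 1..F used). *)

(* cf_aux n k d = [n_(k+d), ..., n_k] = 1/(n_(k+d) + 1/( ... + 1/n_k)) *)
Fixpoint cf_aux (n : nat -> nat) (k d : nat) : rat :=
  match d with
  | 0 => ((n k)%:R)^-1
  | d'.+1 => ((n (k + d)%N)%:R + cf_aux n k d')^-1
  end.

(* [n_a, ..., n_k] for k <= a *)
Definition cf (n : nat -> nat) (k a : nat) : rat := cf_aux n k (a - k).

Definition pk (n : nat -> nat) (k a : nat) : int := numq (cf n k a).
Definition qk (n : nat -> nat) (k a : nat) : int := denq (cf n k a).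

Definition rk (n : nat -> nat) (F k : nat) : int :=
  if (k <= F)%N then pk n k F + qk n k F else 1.

Definition A_F (n : nat -> nat) (F : nat) : rat :=
  \sum_(1 <= a < F) (-1) ^+ (a + 1) / ((pk n 1 a)%:~R * (qk n 1 a)%:~R)
  + (-1) ^+ (F + 1) / ((pk n 1 F)%:~R * (rk n F 1)%:~R).

From mathcomp Require Import all_boot all_order all_algebra.
From mathcomp Require Import ring zify.
Import Order.TTheory GRing.Theory Num.Theory.
Local Open Scope ring_scope.

(* All the fractions involved are ratios of continuants.  Writing
   Q a = q_(a-1) = p_a (the continuant of n_1, ..., n_(a-1)) and P a for the
   continuant of n_2, ..., n_a, the determinant identity
   P (a+1) Q (a+1) - P a Q (a+2) = (-1)^a makes the alternating sum of the
   1 / (p_a q_a) = 1 / (Q a Q (a+1)) telescope to P (F-1) / Q F, and the last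
   term turns this convergent into the mediant
   (P (F-1) + P F) / (Q F + Q (F+1)) = r^(2) / r. *)

(* [continuant n k d] is the continuant of n_k, ..., n_(k+d-2); the recursion
   extends the sequence at its top index, as [cf_aux] does. *)
Fixpoint continuant (n : nat -> nat) (k d : nat) : nat :=
  match d with
  | 0 => 0
  | d1.+1 => match d1 with
             | 0 => 1
             | d'.+1 => n (k + d')%N * continuant n k d1 + continuant n k d'
             end
  end.

Lemma continuantSS n k d :
  continuant n k d.+2 = (n (k + d)%N * continuant n k d.+1 + continuant n k d)%N.
Proof. by []. Qed.

Lemma natr_continuantSS (R : pzSemiRingType) n k d :
  (continuant n k d.+2)%:R
  = (n (k + d)%N)%:R * (continuant n k d.+1)%:R + (continuant n k d)%:R :> R.
Proof. by rewrite continuantSS natrD natrM. Qed.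

Lemma continuant_gt0 n k d :
  (forall i, (i < d)%N -> (0 < n (k + i)%N)%N) -> (0 < continuant n k d.+1)%N.
Proof.
elim: d => [//|d IH] n_gt0; rewrite continuantSS.
have := IH (fun i lt_id => n_gt0 i (ltnW lt_id)).
by have := n_gt0 d (ltnSn d); nia.
Qed.

Lemma coprime_continuantS n k d :
  coprime (continuant n k d.+1) (continuant n k d.+2).
Proof.
elim: d => [|d IH]; first by rewrite /coprime gcd1n.
by rewrite /coprime continuantSS gcdnMDl gcdnC.
Qed.

Lemma cf_auxE n k d : (forall i, (i <= d)%N -> (0 < n (k + i)%N)%N) ->
  cf_aux n k d = (continuant n k d.+1)%:R / (continuant n k d.+2)%:R.
Proof.
elim: d => [|d IH] n_gt0; first by rewrite /= addn0 muln1 addn0 mul1r.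
rewrite [LHS]/= IH; last by move=> i le_id; apply: n_gt0; lia.
have Q_neq0 : (continuant n k d.+2)%:R != 0 :> rat.
  by rewrite pnatr_eq0 -lt0n; apply: continuant_gt0 => i lt_id; apply: n_gt0; lia.
rewrite (natr_continuantSS _ n k d.+1).
by rewrite -[X in (X + _)^-1](mulfK Q_neq0) -mulrDl invf_div.
Qed.

Lemma pk_qk_continuant n k a : (k <= a)%N ->
    (forall i, (k <= i <= a)%N -> (0 < n i)%N) ->
  pk n k a = (continuant n k (a - k).+1)%:Z /\
  qk n k a = (continuant n k (a - k).+2)%:Z.
Proof.
move=> le_ka n_gt0.
have n_gt0' i : (i <= a - k)%N -> (0 < n (k + i)%N)%N.
  by move=> le_i; apply: n_gt0; lia.
have Q_gt0 : (0 < continuant n k (a - k).+2)%N.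
  by apply: continuant_gt0 => i lt_i; apply: n_gt0'; lia.
have cf_ratio : cf n k a = (continuant n k (a - k).+1)%:Z%:~R
                           / (continuant n k (a - k).+2)%:Z%:~R.
  exact: cf_auxE.
have cop := coprime_continuantS n k (a - k).
rewrite /pk /qk cf_ratio coprimeq_num ?coprimeq_den //.
by rewrite gtr0_sg ?ltz_nat // mul1r eqz_nat gtn_eqF.
Qed.

Lemma rk_continuant n F k : (1 <= k <= F.+1)%N ->
    (forall i, (k <= i <= F)%N -> (0 < n i)%N) ->
  rk n F k = (continuant n k (F.+1 - k))%:Z + (continuant n k (F.+2 - k))%:Z.
Proof.
move=> /andP[k_gt0 le_kF] n_gt0; rewrite /rk.
case: leqP => [le_kF' | lt_Fk].
  have [-> ->] := @pk_qk_continuant n k F le_kF' n_gt0.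
  by rewrite -!subSn // leqW.
have -> : k = F.+1 by lia.
by rewrite subnn subSnn.
Qed.

Lemma continuant_det n a :
  (continuant n 2 a.+1)%:R * (continuant n 1 a.+1)%:R
  - (continuant n 2 a)%:R * (continuant n 1 a.+2)%:R = (-1) ^+ a :> rat.
Proof.
elim: a => [|a IH]; first by rewrite /= mul0r subr0 mulr1.
by rewrite (natr_continuantSS _ n 2 a) (natr_continuantSS _ n 1 a.+1) exprS -IH; ring.
Qed.

Section AlternatingSum.

Variables (R : fieldType) (P Q : nat -> R).
Hypothesis P0 : P 0 = 0.
Hypothesis detPQ : forall a, P a.+1 * Q a.+1 - P a * Q a.+2 = (-1) ^+ a.

Lemma sum_alternating_inv m : (forall a, (1 <= a <= m.+1)%N -> Q a != 0) ->
  \sum_(1 <= a < m.+1) (-1) ^+ (a + 1) / (Q a * Q a.+1) = P m / Q m.+1.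
Proof.
elim: m => [|m IH] Q_neq0; first by rewrite big_geq // P0 mul0r.
rewrite big_nat_recr //= IH; last by move=> a ha; apply: Q_neq0; lia.
have Q1 : Q m.+1 != 0 by apply: Q_neq0; lia.
have Q2 : Q m.+2 != 0 by apply: Q_neq0; lia.
rewrite addn1 !exprS !mulN1r opprK -detPQ.
by field; rewrite Q1 Q2.
Qed.

Lemma convergent_add_mediant m : Q m.+1 != 0 -> Q m.+1 + Q m.+2 != 0 ->
  P m / Q m.+1 + (-1) ^+ (m.+1 + 1) / (Q m.+1 * (Q m.+1 + Q m.+2))
  = (P m + P m.+1) / (Q m.+1 + Q m.+2).
Proof.
move=> Q1 Q12; rewrite addn1 !exprS !mulN1r opprK -detPQ.
by field; rewrite Q1 Q12.
Qed.

End AlternatingSum.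

Theorem proposition7p7 (F : nat) (n : nat -> nat) :
  (1 <= F)%N ->
  (forall i, (1 <= i <= F)%N -> (0 < n i)%N) ->
  (2 <= n 1)%N ->
  A_F n F = (rk n F 2)%:~R / (rk n F 1)%:~R.
Proof.
case: F => [//|m] _ n_gt0 _.
pose P a : rat := (continuant n 2 a)%:R; pose Q a : rat := (continuant n 1 a)%:R.
have Q_gt0 a : (1 <= a <= m.+2)%N -> 0 < Q a.
  move=> ha; rewrite ltr0n; case: a ha => [//|a] ha.
  by apply: continuant_gt0 => i lt_ia; apply: n_gt0; lia.
have pq a : (1 <= a <= m.+1)%N ->
    (pk n 1 a)%:~R = Q a /\ (qk n 1 a)%:~R = Q a.+1.
  move=> ha; have n_gt0' i : (1 <= i <= a)%N -> (0 < n i)%N.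
    by move=> hi; apply: n_gt0; lia.
  have [-> ->] := @pk_qk_continuant n 1 a (ltac:(lia)) n_gt0'.
  by rewrite subn1 prednK //; lia.
have [pF _] := pq m.+1 (ltac:(lia)).
rewrite /A_F pF !rk_continuant //; last by move=> i hi; apply: n_gt0; lia.
rewrite !subSS !subn0.
rewrite (eq_big_nat _ _ (F2 := fun a => (-1) ^+ (a + 1) / (Q a * Q a.+1))); last first.
  by move=> a ha; have [-> ->] := pq a (ltac:(lia)).
have detPQ a : P a.+1 * Q a.+1 - P a * Q a.+2 = (-1) ^+ a := continuant_det n a.
rewrite (@sum_alternating_inv _ P Q erefl detPQ); last first.
  by move=> a ha; rewrite gt_eqF // Q_gt0 //; lia.
rewrite !intrD; apply: (@convergent_add_mediant _ P Q detPQ).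
- by rewrite gt_eqF // Q_gt0 //; lia.
- by rewrite gt_eqF // addr_gt0 // Q_gt0 //; lia.
Qed.
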